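(* Let $r\ge 1$ be an integer, $\tau_0>0$, and let $k_a$ satisfy $rk_a\in(0,1)$. Let $$h_w> \frac{4\tau_0}{(1+r)(1+rk_a)}.$$ Then there exist $k_v>0$, $k_p>0$ such that for every $\tau\in[0,\tau_0]$, the polynomial $\tau s^3+s^2+\big(rk_v+\tfrac{r(r+1)}{2}k_ph_w\big)s+rk_p$ is Hurwitz and $$r\,\sup_{\omega\in\mathbb{R}}|H_0(j\omega;\tau)|\le 1,\qquad H_0(s;\tau)=\frac{k_as^2+k_vs+k_p}{\tau s^3+s^2+\big(rk_v+\tfrac{r(r+1)}{2}k_ph_w\big)s+rk_p}.$$ Consequently, for every $\tau\in[0,\tau_0]$ and every $\omega\in\mathbb{R}$, all roots $z$ of $P(z;\omega)=z^r-H_0(j\omega;\tau)\sum_{l=1}^r z^{r-l}$ satisfy $|z|\le 1$ (i.e. the platoon is robustly string stable).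
   Context: Platoon of identical vehicles with dynamics $\ddot x_i=a_i$, $\tau\dot a_i+a_i=u_i$, parasitic lag $\tau\in[0,\tau_0]$, each vehicle using position, velocity and acceleration of its $r$ immediate predecessors via the control law $u_i=\sum_{l=1}^r\big[k_a a_{i-l}-k_v(v_i-v_{i-l})-k_p(x_i-x_{i-l}+d_l+l h_w v_i)\big]$ (identical gains for all $l$), where $d_l$ is the standstill distance to the $l$-th predecessor. With spacing errors $e_i=x_i-x_{i-1}+d+h_wv_i$, the errors propagate as $E_i(s)=H_0(s)\sum_{l=1}^rE_{i-l}(s)$. Robust string stability means the spectral radius of the characteristic polynomial $P(z;\omega)$ is at most $1$ for all $\omega$ and all $\tau\in[0,\tau_0]$. *)

(* Complex numbers = an arbitrary numClosedFieldType C
   (e.g. algC); "real" quantities are elements x of C with x \is Num.real. *)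
From HB Require Import structures.
From mathcomp Require Import all_boot all_order all_algebra.
Set Implicit Arguments. Unset Strict Implicit. Unset Printing Implicit Defensive.
Import Order.TTheory GRing.Theory Num.Theory.
Local Open Scope ring_scope.

Definition hurwitz (C : numClosedFieldType) (p : {poly C}) : Prop :=
  p != 0 /\ forall z : C, root p z -> 'Re z < 0.

Definition charpoly (C : numClosedFieldType) (r : nat) (kv kp hw tau : C)
  : {poly C} :=
  tau *: 'X^3 + 'X^2
  + (r%:R * kv + (r * r.+1)%:R / 2%:R * kp * hw) *: 'X
  + (r%:R * kp)%:P.

Definition numpoly (C : numClosedFieldType) (ka kv kp : C) : {poly C} :=
  ka *: 'X^2 + kv *: 'X + kp%:P.

Definition H0 (C : numClosedFieldType) (r : nat) (ka kv kp hw tau s : C) : C :=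
  (numpoly ka kv kp).[s] / (charpoly r kv kp hw tau).[s].

Definition Ppoly (C : numClosedFieldType) (r : nat) (H : C) : {poly C} :=
  'X^r - H *: \sum_(1 <= l < r.+1) 'X^(r - l).

From HB Require Import structures.
From mathcomp Require Import all_boot all_order all_algebra.
From mathcomp Require Import ring zify.
Set Implicit Arguments. Unset Strict Implicit. Unset Printing Implicit Defensive.
Import Order.TTheory GRing.Theory Num.Theory.
Local Open Scope ring_scope.

(* For [t >= 0] the cubic [t s^3 + s^2 + b s + c] is Hurwitz as soon as
   [c > 0] and [t c < b] (Routh-Hurwitz), and [R |H0(w i)| <= 1] holds when
   [|den|^2 - R^2 |num|^2 = w^2 (A + B w^2 + t^2 w^4)] has [A, B >= 0].
   Taking [b = (1 - (r ka)^2) / (2 tau0)] makes [B >= 0] for [tau <= tau0];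
   [kv] and [kp] are then fixed by requiring [A] to be a perfect square and
   [b = r kv + r(r+1)/2 kp hw], and the lower bound on [hw] is exactly what
   makes [kp > 0] and [tau r kp < b].  Finally, if [r |H| <= 1], a root of
   [z^r = H (z^(r-1) + ... + 1)] with [|z| > 1] would satisfy
   [|z|^r <= r |H| |z|^(r-1) <= |z|^(r-1)]. *)

Ltac solve_real :=
  repeat first [ assumption | rewrite realN | apply: realD | apply: realB
               | apply: realM | apply: realX | apply: realn ].

Section Cubic.
Variable C : numClosedFieldType.

Definition cubic (t b c : C) : {poly C} := t *: 'X^3 + 'X^2 + b *: 'X + c%:P.

Lemma horner_cubic (t b c z : C) :
  (cubic t b c).[z] = t * z ^+ 3 + z ^+ 2 + b * z + c.
Proof. by rewrite /cubic !(hornerD, hornerZ, hornerXn, hornerX, hornerC). Qed.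

Lemma rect_eq0 (x y : C) : x \is Num.real -> y \is Num.real ->
  x + 'i * y = 0 -> x = 0 /\ y = 0.
Proof.
move=> xr yr xy0; split.
  by rewrite -(Re_rect xr yr) xy0 (Creal_ReP 0 (real0 _)).
by rewrite -(Im_rect xr yr) xy0 (Creal_ImP 0 (real0 _)).
Qed.

Lemma cubic_rect_root_lt0 (t b c x y : C) :
  0 <= t -> 0 < c -> t * c < b -> x \is Num.real -> y \is Num.real ->
  t * (x ^+ 3 - 3%:R * x * y ^+ 2) + x ^+ 2 - y ^+ 2 + b * x + c = 0 ->
  y * (t * (3%:R * x ^+ 2 - y ^+ 2) + 2%:R * x + b) = 0 ->
  x < 0.
Proof.
move=> t_ge0 c_gt0 tc_lt_b xr yr re0 im0.
have b_gt0 : 0 < b by apply: le_lt_trans tc_lt_b; rewrite mulr_ge0 // ltW.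
rewrite real_ltNge ?real0 //; apply/negP => x_ge0.
move: im0 => /eqP; rewrite mulf_eq0 => /orP[/eqP y0 | /eqP im0].
  move: re0; rewrite y0 expr0n /= !mulr0 !subr0 => /eqP.
  by rewrite gt_eqF // ltr_wpDl // !addr_ge0 // ?mulr_ge0 ?exprn_ge0 // ltW.
(* This combination of the real part and of the imaginary part divided by [y]
   eliminates [y]. *)
have key : t * (t * (x ^+ 3 - 3%:R * x * y ^+ 2) + x ^+ 2 - y ^+ 2 + b * x + c)
    - (3%:R * t * x + 1) * (t * (3%:R * x ^+ 2 - y ^+ 2) + 2%:R * x + b)
    = (t * c - b) - (8%:R * t ^+ 2 * x ^+ 3 + 8%:R * t * x ^+ 2
                     + 2%:R * b * t * x + 2%:R * x) by ring.
have S_ge0 : 0 <= 8%:R * t ^+ 2 * x ^+ 3 + 8%:R * t * x ^+ 2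
                  + 2%:R * b * t * x + 2%:R * x.
  by rewrite !addr_ge0 // !mulr_ge0 // ?exprn_ge0 // ltW.
move: key; rewrite re0 im0 !mulr0 subr0 => /eqP; rewrite eq_sym subr_eq add0r => /eqP tcb.
by move: tc_lt_b; rewrite -subr_lt0 tcb => /(le_lt_trans S_ge0); rewrite ltxx.
Qed.

Lemma cubic_root_Re_lt0 (t b c z : C) :
  0 <= t -> 0 < c -> t * c < b -> root (cubic t b c) z -> 'Re z < 0.
Proof.
move=> t_ge0 c_gt0 tc_lt_b; rewrite rootE horner_cubic => /eqP z_root.
have b_gt0 : 0 < b by apply: le_lt_trans tc_lt_b; rewrite mulr_ge0 // ltW.
have tr := ger0_real t_ge0; have br := gtr0_real b_gt0; have cr := gtr0_real c_gt0.
set x := 'Re z; set y := 'Im z.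
have xr : x \is Num.real := Creal_Re z.
have yr : y \is Num.real := Creal_Im z.
set re := t * (x ^+ 3 - 3%:R * x * y ^+ 2) + x ^+ 2 - y ^+ 2 + b * x + c.
set im := y * (t * (3%:R * x ^+ 2 - y ^+ 2) + 2%:R * x + b).
have rect_root : re + 'i * im = 0.
  have -> : re + 'i * im = t * z ^+ 3 + z ^+ 2 + b * z + c
      - ('i ^+ 2 + 1) * (3%:R * t * x * y ^+ 2 + t * y ^+ 3 * 'i + y ^+ 2).
    by rewrite [in RHS](Crect z) /re /im -/x -/y; ring.
  by rewrite z_root sqrCi addNr mul0r subr0.
have [re0 im0] : re = 0 /\ im = 0.
  by apply: rect_eq0 rect_root; rewrite /re /im; solve_real.
exact: (cubic_rect_root_lt0 t_ge0 c_gt0 tc_lt_b xr yr re0 im0).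
Qed.

Lemma hurwitz_cubic (t b c : C) :
  0 <= t -> 0 < c -> t * c < b -> hurwitz (cubic t b c).
Proof.
move=> t_ge0 c_gt0 tc_lt_b; split; last by move=> z; apply: cubic_root_Re_lt0.
apply/negP => /eqP/(congr1 (horner^~ 0)).
by rewrite /= horner_cubic horner0 !expr0n !mulr0 !add0r; apply/eqP; rewrite gt_eqF.
Qed.

Lemma horner_cubic_imag (t b c w : C) :
  (cubic t b c).[w * 'i] = (c - w ^+ 2) + 'i * (b * w - t * w ^+ 3).
Proof. by rewrite horner_cubic !exprMn (exprS 'i 2) sqrCi; ring. Qed.

Lemma horner_numpoly_imag (ka kv kp w : C) :
  (numpoly ka kv kp).[w * 'i] = (kp - ka * w ^+ 2) + 'i * (kv * w).
Proof.
by rewrite /numpoly !(hornerD, hornerZ, hornerXn, hornerX, hornerC) exprMn sqrCi; ring.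
Qed.

Lemma norm_rect_ratio_le1 (R u1 v1 u2 v2 : C) :
  u1 \is Num.real -> v1 \is Num.real -> u2 \is Num.real -> v2 \is Num.real ->
  0 <= R -> R ^+ 2 * (u1 ^+ 2 + v1 ^+ 2) <= u2 ^+ 2 + v2 ^+ 2 ->
  R * `|(u1 + 'i * v1) / (u2 + 'i * v2)| <= 1.
Proof.
move=> u1r v1r u2r v2r R_ge0 le_uv.
have [->|nz_den] := eqVneq (u2 + 'i * v2) 0.
  by rewrite invr0 mulr0 normr0 mulr0 ler01.
rewrite normf_div mulrA ler_pdivrMr ?normr_gt0 // mul1r.
rewrite -(ler_pXn2r (n := 2)) // ?nnegrE ?mulr_ge0 //.
by rewrite exprMn !normC2_rect.
Qed.

Lemma cubic_gain_le1 (R ka kv kp b t w : C) :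
  [/\ ka \is Num.real, kv \is Num.real, kp \is Num.real & b \is Num.real] ->
  t \is Num.real -> w \is Num.real -> 0 <= R ->
  0 <= b ^+ 2 - 2%:R * (R * kp) * (1 - R * ka) - R ^+ 2 * kv ^+ 2 ->
  0 <= 1 - (R * ka) ^+ 2 - 2%:R * b * t ->
  R * `|(numpoly ka kv kp).[w * 'i] / (cubic t b (R * kp)).[w * 'i]| <= 1.
Proof.
move=> [kar kvr kpr br] tr wr R_ge0 A_ge0 B_ge0.
have Rr := ger0_real R_ge0.
rewrite horner_numpoly_imag horner_cubic_imag.
apply: norm_rect_ratio_le1 => //; try solve_real.
rewrite -subr_ge0.
have -> : (R * kp - w ^+ 2) ^+ 2 + (b * w - t * w ^+ 3) ^+ 2
          - R ^+ 2 * ((kp - ka * w ^+ 2) ^+ 2 + (kv * w) ^+ 2) =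
  w ^+ 2 * ((b ^+ 2 - 2%:R * (R * kp) * (1 - R * ka) - R ^+ 2 * kv ^+ 2)
     + (1 - (R * ka) ^+ 2 - 2%:R * b * t) * w ^+ 2 + t ^+ 2 * (w ^+ 2) ^+ 2).
  by ring.
have w2_ge0 : 0 <= w ^+ 2 by rewrite -realEsqr.
have t2_ge0 : 0 <= t ^+ 2 by rewrite -realEsqr.
apply: mulr_ge0 => //; apply: addr_ge0; first apply: addr_ge0 => //.
  exact: mulr_ge0.
by rewrite mulr_ge0 // exprn_ge0.
Qed.

End Cubic.

Lemma Ppoly_root_norm_le1 (C : numClosedFieldType) (r : nat) (H z : C) :
  (1 <= r)%N -> r%:R * `|H| <= 1 -> root (Ppoly r H) z -> `|z| <= 1.
Proof.
case: r => [//|r] _ rH.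
rewrite rootE /Ppoly !hornerE horner_sum subr_eq0 => /eqP z_root.
rewrite real_leNgt ?normr_real ?real1 //; apply/negP => z_gt1.
have z_ge1 : 1 <= `|z| by exact: ltW.
have : `|z| ^+ r.+1 <= `|z| ^+ r.
  rewrite -normrX z_root normrM.
  apply: (@le_trans _ _ (`|H| * (`|z| ^+ r *+ r.+1))).
    apply: ler_wpM2l => //.
    have -> : `|z| ^+ r *+ r.+1 = \sum_(1 <= l < r.+2) `|z| ^+ r.
      by rewrite sumr_const_nat subn1.
    apply: (le_trans (ler_norm_sum _ _ _)).
    rewrite big_nat_cond [X in _ <= X]big_nat_cond.
    apply: ler_sum => l /andP [/andP [l_ge1 _] _]; rewrite hornerXn normrX.
    by apply: ler_weXn2l => //; lia.
  by rewrite -mulr_natl mulrCA mulrA ler_piMl // exprn_ge0.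
by rewrite exprS ger_pMl ?exprn_gt0 ?(lt_trans ltr01) // => /(lt_le_trans z_gt1); rewrite ltxx.
Qed.

Section GainDesign.
Variables (C : numClosedFieldType) (r : nat) (tau0 ka hw : C).
Hypotheses (r_gt0 : (0 < r)%N) (tau0_gt0 : 0 < tau0).
Hypotheses (rka_gt0 : 0 < r%:R * ka) (rka_lt1 : r%:R * ka < 1).
Hypothesis hw_large : 4%:R * tau0 / ((1 + r%:R) * (1 + r%:R * ka)) < hw.

Let F := (1 + r%:R) * hw.
Let E := hw * ((1 + r%:R) * (1 + r%:R * ka)) - 4%:R * tau0.

(* [b_design] is the largest damping keeping [B >= 0] up to [tau = tau0];
   [kv_design] and [kp_design] make [A] a perfect square. *)
Definition kv_design : C := 2%:R * (1 - r%:R * ka) / (r%:R * F).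
Definition kp_design : C := (1 - r%:R * ka) * E / (tau0 * r%:R * F ^+ 2).
Definition b_design : C := (1 - (r%:R * ka) ^+ 2) / (2%:R * tau0).

Let r_pos : 0 < r%:R :> C. Proof. by rewrite ltr0n. Qed.
Let one_sub_rka_gt0 : 0 < 1 - r%:R * ka. Proof. by rewrite subr_gt0. Qed.
Let one_add_rka_gt0 : 0 < 1 + r%:R * ka. Proof. by rewrite addr_gt0. Qed.
Let one_add_r_gt0 : 0 < 1 + r%:R :> C. Proof. by rewrite addr_gt0. Qed.

Let hw_gt0 : 0 < hw.
Proof. by apply: lt_trans hw_large; rewrite divr_gt0 ?mulr_gt0 ?ltr0n. Qed.
Let E_gt0 : 0 < E.
Proof. by rewrite subr_gt0 -ltr_pdivrMr // mulr_gt0. Qed.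
Let F_gt0 : 0 < F. Proof. by rewrite mulr_gt0. Qed.

Lemma kv_design_gt0 : 0 < kv_design.
Proof. by rewrite divr_gt0 ?mulr_gt0 ?ltr0n. Qed.

Lemma kp_design_gt0 : 0 < kp_design.
Proof. by rewrite divr_gt0 ?mulr_gt0 ?exprn_gt0. Qed.

Lemma b_design_gt0 : 0 < b_design.
Proof.
rewrite divr_gt0 ?mulr_gt0 ?ltr0n // subr_gt0 expr2.
by rewrite (@le_lt_trans _ _ (r%:R * ka)) // ger_pMr // ltW.
Qed.

Lemma charpoly_design (tau : C) :
  charpoly r kv_design kp_design hw tau
  = cubic tau b_design (r%:R * kp_design).
Proof.
rewrite /charpoly /cubic; congr (_ + _ *: _ + _).
rewrite natrM -natr1 /kv_design /kp_design /b_design /E /F.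
by field; rewrite !gt_eqF.
Qed.

Lemma design_w2_coef_ge0 :
  0 <= b_design ^+ 2 - 2%:R * (r%:R * kp_design) * (1 - r%:R * ka)
       - r%:R ^+ 2 * kv_design ^+ 2.
Proof.
have -> : b_design ^+ 2 - 2%:R * (r%:R * kp_design) * (1 - r%:R * ka)
          - r%:R ^+ 2 * kv_design ^+ 2
        = ((1 - r%:R * ka) * E / (2%:R * tau0 * F)) ^+ 2.
  by rewrite /b_design /kp_design /kv_design /E /F; field; rewrite !gt_eqF.
by rewrite -realEsqr gtr0_real // divr_gt0 ?mulr_gt0.
Qed.

Lemma design_w4_coef_ge0 (tau : C) : tau <= tau0 ->
  0 <= 1 - (r%:R * ka) ^+ 2 - 2%:R * b_design * tau.
Proof.
move=> tau_le.
have -> : 1 - (r%:R * ka) ^+ 2 - 2%:R * b_design * tau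
        = (1 - r%:R * ka) * (1 + r%:R * ka) * (tau0 - tau) / tau0.
  by rewrite /b_design; field; rewrite gt_eqF.
by rewrite divr_ge0 ?mulr_ge0 ?subr_ge0 // ltW.
Qed.

Lemma design_routh (tau : C) : tau <= tau0 ->
  tau * (r%:R * kp_design) < b_design.
Proof.
move=> tau_le; rewrite -subr_gt0.
have -> : b_design - tau * (r%:R * kp_design) =
    (1 - r%:R * ka) * ((1 + r%:R * ka) * (F - tau0) ^+ 2
       + (6%:R + (1 - r%:R * ka)) * tau0 ^+ 2) / (2%:R * tau0 * F ^+ 2)
    + (tau0 - tau) * (r%:R * kp_design).
  by rewrite /b_design /kp_design /E /F; field; rewrite !gt_eqF.
apply: ltr_wpDr; first by rewrite mulr_ge0 ?subr_ge0 // ltW // mulr_gt0 // kp_design_gt0.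
rewrite divr_gt0 ?mulr_gt0 ?exprn_gt0 //.
have sq_ge0 : 0 <= (F - tau0) ^+ 2 by rewrite -realEsqr rpredB // gtr0_real.
apply: ltr_wpDl; first by rewrite mulr_ge0 // ltW.
by rewrite mulr_gt0 ?exprn_gt0 // addr_gt0 // ltr0n.
Qed.

End GainDesign.

Theorem theorem2 (C : numClosedFieldType) (r : nat) (tau0 ka hw : C) :
  (1 <= r)%N -> 0 < tau0 ->
  0 < r%:R * ka -> r%:R * ka < 1 ->
  hw \is Num.real ->
  4%:R * tau0 / ((1 + r%:R) * (1 + r%:R * ka)) < hw ->
  exists kv kp : C, 0 < kv /\ 0 < kp /\
    forall tau : C, 0 <= tau -> tau <= tau0 ->
      hurwitz (charpoly r kv kp hw tau) /\
      (forall w : C, w \is Num.real ->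
         r%:R * `|H0 r ka kv kp hw tau (w * 'i)| <= 1) /\
      (forall w : C, w \is Num.real -> forall z : C,
         root (Ppoly r (H0 r ka kv kp hw tau (w * 'i))) z -> `|z| <= 1).
Proof.
move=> r_gt0 tau0_gt0 rka_gt0 rka_lt1 _ hw_large.
have kv_gt0 := kv_design_gt0 r_gt0 tau0_gt0 rka_gt0 rka_lt1 hw_large.
have kp_gt0 := kp_design_gt0 r_gt0 tau0_gt0 rka_gt0 rka_lt1 hw_large.
have b_gt0 := b_design_gt0 tau0_gt0 rka_gt0 rka_lt1.
have r_pos : 0 < r%:R :> C by rewrite ltr0n.
have ka_gt0 : 0 < ka by rewrite -(pmulr_rgt0 _ r_pos).
exists (kv_design r ka hw), (kp_design r tau0 ka hw).
split => //; split => // tau tau_ge0 tau_le.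
have gain_le1 : forall w : C, w \is Num.real ->
    r%:R * `|H0 r ka (kv_design r ka hw) (kp_design r tau0 ka hw) hw tau (w * 'i)| <= 1.
  move=> w wr; rewrite /H0 charpoly_design //.
  apply: cubic_gain_le1 => //.
  - by split; apply: gtr0_real.
  - exact: ger0_real.
  - by apply: design_w2_coef_ge0.
  - by apply: design_w4_coef_ge0.
split; last split => // w wr z; last by apply: Ppoly_root_norm_le1 => //; exact: gain_le1.
rewrite charpoly_design //; apply: hurwitz_cubic => //; first exact: mulr_gt0.
by apply: design_routh.
Qed.
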